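(* For every formula $\varphi$ of $\mathcal{L}(\Rightarrow)$, $\varphi$ is a theorem of the Yalcin logic if and only if $\varphi$ is a theorem of the logic defined in the same way as the Yalcin logic but with the axiom schemes A1–A4 in place of I1–I7, where A1: $(\varphi\Rightarrow\pi)\leftrightarrow\Box(\varphi\to\pi)$ for $\pi$ nonmodal; A2: $(\varphi\Rightarrow(\alpha\wedge\beta))\leftrightarrow((\varphi\Rightarrow\alpha)\wedge(\varphi\Rightarrow\beta))$; A3: $(\varphi\Rightarrow(\alpha\vee\Box\beta))\leftrightarrow((\varphi\Rightarrow\alpha)\vee(\varphi\Rightarrow\beta))$; A4: $(\varphi\Rightarrow(\alpha\vee\Diamond\beta))\leftrightarrow((\varphi\Rightarrow\alpha)\vee\neg(\varphi\Rightarrow\neg\beta))$.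
   Context: The language $\mathcal{L}(\Rightarrow)$ is given by $\varphi::= p\mid \neg\varphi\mid (\varphi\wedge\varphi)\mid \Box\varphi \mid (\varphi\Rightarrow\varphi)$, with $p$ ranging over a fixed set of propositional variables; $\vee,\to,\leftrightarrow,\bot$ as usual and $\Diamond\varphi:=\neg\Box\neg\varphi$. A formula is nonmodal if it contains neither $\Rightarrow$ nor $\Box$. The Yalcin logic is the smallest set of formulas of $\mathcal{L}(\Rightarrow)$ closed under replacement of equivalents (if $\alpha\leftrightarrow\beta$ is in the set and $\varphi'$ results from $\varphi$ by replacing an occurrence of $\alpha$ by $\beta$, then $\varphi\leftrightarrow\varphi'$ is in the set), modus ponens for $\to$, and necessitation for $\Box$, and containing all substitution instances of propositional tautologies and all instances of: K: $\Box(\varphi\to\psi)\to(\Box\varphi\to\Box\psi)$; 4: $\Diamond\Diamond\varphi\to\Diamond\varphi$; 5: $\Diamond\Box\varphi\to\Box\varphi$; I1: $(\varphi\Rightarrow\pi)\leftrightarrow\Box(\varphi\to\pi)$ for $\pi$ nonmodal; I2: $(\varphi\Rightarrow(\alpha\wedge\beta))\leftrightarrow((\varphi\Rightarrow\alpha)\wedge(\varphi\Rightarrow\beta))$; I3: $(\varphi\Rightarrow\alpha)\to(\varphi\Rightarrow(\alpha\vee\beta))$; I4: $(\varphi\Rightarrow\alpha)\to(\varphi\Rightarrow\Box\alpha)$; I5: $((\varphi\Rightarrow(\alpha\vee\Box\beta))\wedge\neg(\varphi\Rightarrow\beta))\to(\varphi\Rightarrow\alpha)$; I6: $((\varphi\Rightarrow(\alpha\vee\Diamond\beta))\wedge(\varphi\Rightarrow\neg\beta))\to(\varphi\Rightarrow\alpha)$;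 I7: $\neg(\varphi\Rightarrow\beta)\to(\varphi\Rightarrow\Diamond\neg\beta)$. The alternative logic has the same rules and the axioms tautologies, K, 4, 5, A1–A4. *)

From Stdlib Require Import List Bool.

Set Implicit Arguments.

Inductive form (V : Type) : Type :=
| Var : V -> form V
| Neg : form V -> form V
| And : form V -> form V -> form V
| Box : form V -> form V
| Cond : form V -> form V -> form V.

Arguments Var {V}. Arguments Neg {V}. Arguments And {V}.
Arguments Box {V}. Arguments Cond {V}.

Section Abbrev.
Context {V : Type}.
Definition Or (a b : form V) : form V := Neg (And (Neg a) (Neg b)).
Definition Imp (a b : form V) : form V := Neg (And a (Neg b)).
Definition Iff (a b : form V) : form V := And (Imp a b) (Imp b a).
Definition Dia (a : form V) : form V := Neg (Box (Neg a)).

Fixpoint nonmodal (f : form V) : Prop :=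
  match f with
  | Var _ => True
  | Neg a => nonmodal a
  | And a b => nonmodal a /\ nonmodal b
  | Box _ => False
  | Cond _ _ => False
  end.
End Abbrev.

Inductive pform : Type :=
| PVar : nat -> pform
| PNeg : pform -> pform
| PAnd : pform -> pform -> pform.

Fixpoint peval (v : nat -> bool) (t : pform) : bool :=
  match t with
  | PVar n => v n
  | PNeg a => negb (peval v a)
  | PAnd a b => peval v a && peval v b
  end.

Definition tautology (t : pform) : Prop := forall v, peval v t = true.

Fixpoint psubst {V : Type} (s : nat -> form V) (t : pform) : form V :=
  match t with
  | PVar n => s n
  | PNeg a => Neg (psubst s a)
  | PAnd a b => And (psubst s a) (psubst s b)
  end.

Definition taut_instance {V : Type} (f : form V) : Prop :=
  exists t s, tautology t /\ f = psubst s t.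

(** One-hole contexts, for replacing a single occurrence of a subformula. *)
Inductive ctx (V : Type) : Type :=
| Hole : ctx V
| CNeg : ctx V -> ctx V
| CAndL : ctx V -> form V -> ctx V
| CAndR : form V -> ctx V -> ctx V
| CBox : ctx V -> ctx V
| CCondL : ctx V -> form V -> ctx V
| CCondR : form V -> ctx V -> ctx V.

Arguments Hole {V}.

Fixpoint plug {V : Type} (c : ctx V) (x : form V) : form V :=
  match c with
  | Hole => x
  | CNeg c => Neg (plug c x)
  | CAndL c b => And (plug c x) b
  | CAndR a c => And a (plug c x)
  | CBox c => Box (plug c x)
  | CCondL c b => Cond (plug c x) b
  | CCondR a c => Cond a (plug c x)
  end.

Inductive base_ax {V : Type} : form V -> Prop :=
| ax_taut f : taut_instance f -> base_ax f
| ax_K a b : base_ax (Imp (Box (Imp a b)) (Imp (Box a) (Box b)))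
| ax_4 a : base_ax (Imp (Dia (Dia a)) (Dia a))
| ax_5 a : base_ax (Imp (Dia (Box a)) (Box a)).

Inductive I_ax {V : Type} : form V -> Prop :=
| I1 f p : nonmodal p -> I_ax (Iff (Cond f p) (Box (Imp f p)))
| I2 f a b : I_ax (Iff (Cond f (And a b)) (And (Cond f a) (Cond f b)))
| I3 f a b : I_ax (Imp (Cond f a) (Cond f (Or a b)))
| I4 f a : I_ax (Imp (Cond f a) (Cond f (Box a)))
| I5 f a b : I_ax (Imp (And (Cond f (Or a (Box b))) (Neg (Cond f b))) (Cond f a))
| I6 f a b : I_ax (Imp (And (Cond f (Or a (Dia b))) (Cond f (Neg b))) (Cond f a))
| I7 f b : I_ax (Imp (Neg (Cond f b)) (Cond f (Dia (Neg b)))).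

Inductive A_ax {V : Type} : form V -> Prop :=
| A1 f p : nonmodal p -> A_ax (Iff (Cond f p) (Box (Imp f p)))
| A2 f a b : A_ax (Iff (Cond f (And a b)) (And (Cond f a) (Cond f b)))
| A3 f a b : A_ax (Iff (Cond f (Or a (Box b))) (Or (Cond f a) (Cond f b)))
| A4 f a b : A_ax (Iff (Cond f (Or a (Dia b))) (Or (Cond f a) (Neg (Cond f (Neg b))))).

Inductive thm {V : Type} (Ax : form V -> Prop) : form V -> Prop :=
| t_base f : base_ax f -> thm Ax f
| t_ax f : Ax f -> thm Ax f
| t_mp a b : thm Ax (Imp a b) -> thm Ax a -> thm Ax b
| t_nec a : thm Ax a -> thm Ax (Box a)
| t_re a b c : thm Ax (Iff a b) -> thm Ax (Iff (plug c a) (plug c b)).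

Definition yalcin_thm {V : Type} : form V -> Prop := thm I_ax.
Definition alt_thm {V : Type} : form V -> Prop := thm A_ax.

(* Both logics share their rules and their non-conditional axioms, so each
   proves the other's theorems as soon as it proves the other's conditional
   axioms.  The left-to-right halves of A3 and A4 are
   I5 and I6; for the right-to-left halves, [f => b] yields [f => Box b] by I4,
   and [~ (f => ~ b)] yields [f => Dia ~~b], i.e. [f => Dia b], by I7; I3 then
   adds the missing disjunct.  Conversely, I3 is A2 applied to the equivalent
   consequent [a /\ (a \/ b)], I4 is A3 for [Box a \/ Box a], I5 and I6 are
   halves of A3 and A4, and I7 is A4 for the consequent [Dia ~b \/ Dia ~b]. *)
From Stdlib Require Import List.

Section DerivedRules.
Context {V : Type} {Ax : form V -> Prop}.

Lemma thm_taut_instance (t : pform) (s : nat -> form V) (f : form V) :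
  tautology t -> psubst s t = f -> thm Ax f.
Proof. intros Ht <-. apply t_base, ax_taut. now exists t, s. Qed.

Lemma thm_mp_r {a c} : thm Ax a -> thm Ax (Imp a c) -> thm Ax c.
Proof. intros Ha Hac. exact (t_mp Hac Ha). Qed.

Lemma thm_cond_congr f a b :
  thm Ax (Iff a b) -> thm Ax (Iff (Cond f a) (Cond f b)).
Proof. exact (t_re (CCondR f Hole)). Qed.

End DerivedRules.

Lemma thm_incl {V : Type} (Ax1 Ax2 : form V -> Prop) :
  (forall g, Ax1 g -> thm Ax2 g) -> forall g, thm Ax1 g -> thm Ax2 g.
Proof.
  intros HAx g Hg. induction Hg.
  - now apply t_base.
  - now apply HAx.
  - eapply t_mp; eauto.
  - now apply t_nec.
  - now apply t_re.
Qed.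

(* [taut] proves a goal [thm Ax F] where [F] is a substitution instance of a
   tautology: it reifies [F] over its maximal non-propositional subformulas and
   checks the resulting [pform] on all valuations. *)
Ltac add_atom x l :=
  lazymatch l with
  | context [cons x _] => l
  | _ => constr:(cons x l)
  end.

Ltac atoms F l :=
  lazymatch F with
  | Neg ?a => atoms a l
  | And ?a ?b => let l' := atoms a l in atoms b l'
  | _ => add_atom F l
  end.

Ltac lookup x l :=
  lazymatch l with
  | cons x _ => constr:(0)
  | cons _ ?l' => let n := lookup x l' in constr:(S n)
  end.

Ltac reify F l :=
  lazymatch F with
  | Neg ?a => let r := reify a l in constr:(PNeg r)
  | And ?a ?b => let r1 := reify a l in let r2 := reify b l in constr:(PAnd r1 r2)
  | _ => let n := lookup F l in constr:(PVar n)
  end.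

Ltac taut :=
  unfold Iff, Imp, Or, Dia;
  lazymatch goal with
  | |- thm _ ?F =>
    let T := type of F in
    let l := atoms F (@nil T) in
    let t := reify F l in
    lazymatch l with
    | cons ?d _ =>
      apply (thm_taut_instance t (fun n => nth n l d));
      [ intros v; simpl;
        repeat match goal with |- context [v ?n] => destruct (v n) end;
        reflexivity
      | reflexivity ]
    end
  end.

Ltac propositional :=
  repeat match goal with H : thm _ _ |- _ => refine (thm_mp_r H _); clear H end;
  taut.

Section Translations.
Context {V : Type}.

Lemma I_ax_alt_thm (g : form V) : I_ax g -> alt_thm g.
Proof.
  unfold alt_thm.
  destruct 1.
  - now apply t_ax, A1.
  - apply t_ax, A2.
  - assert (Habs : thm A_ax (Iff a (And a (Or a b)))) by taut.
    apply (thm_cond_congr f) in Habs.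
    pose proof (t_ax _ _ (A2 f a (Or a b))).
    propositional.
  - assert (Hidem : thm A_ax (Iff (Or (Box a) (Box a)) (Box a))) by taut.
    apply (thm_cond_congr f) in Hidem.
    pose proof (t_ax _ _ (A3 f (Box a) a)).
    propositional.
  - pose proof (t_ax _ _ (A3 f a b)).
    propositional.
  - pose proof (t_ax _ _ (A4 f a b)).
    propositional.
  - assert (Hdneg : thm A_ax (Iff (Neg (Neg b)) b)) by taut.
    apply (thm_cond_congr f) in Hdneg.
    assert (Hidem : thm A_ax (Iff (Or (Dia (Neg b)) (Dia (Neg b))) (Dia (Neg b))))
      by taut.
    apply (thm_cond_congr f) in Hidem.
    pose proof (t_ax _ _ (A4 f (Dia (Neg b)) (Neg b))).
    propositional.
Qed.

Lemma A_ax_yalcin_thm (g : form V) : A_ax g -> yalcin_thm g.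
Proof.
  unfold yalcin_thm.
  destruct 1.
  - now apply t_ax, I1.
  - apply t_ax, I2.
  - pose proof (t_ax _ _ (I5 f a b)).
    pose proof (t_ax _ _ (I3 f a (Box b))).
    pose proof (t_ax _ _ (I4 f b)).
    pose proof (t_ax _ _ (I3 f (Box b) a)).
    assert (Hcomm : thm I_ax (Iff (Or (Box b) a) (Or a (Box b)))) by taut.
    apply (thm_cond_congr f) in Hcomm.
    propositional.
  - pose proof (t_ax _ _ (I6 f a b)).
    pose proof (t_ax _ _ (I3 f a (Dia b))).
    pose proof (t_ax _ _ (I7 f (Neg b))).
    pose proof (t_ax _ _ (I3 f (Dia b) a)).
    assert (Hcomm : thm I_ax (Iff (Or (Dia b) a) (Or a (Dia b)))) by taut.
    apply (thm_cond_congr f) in Hcomm.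
    assert (Hdneg : thm I_ax (Iff (Neg (Neg (Neg b))) (Neg b))) by taut.
    pose proof (t_re (CCondR f (CNeg (CBox Hole))) Hdneg) as Hdia.
    cbn [plug] in Hdia.
    propositional.
Qed.

End Translations.

Theorem lemma4 (V : Type) (phi : form V) : yalcin_thm phi <-> alt_thm phi.
Proof.
  split; apply thm_incl.
  - exact I_ax_alt_thm.
  - exact A_ax_yalcin_thm.
Qed.
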